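(* Let $y_0\in Y$. If $V_{per}(y_0)=\liminf_{T\to\infty}V_T(y_0)$, then $\liminf_{T\to\infty}V_T(y_0)\ge k^*(y_0)$.
   Context: Let $Y\subset\mathbb{R}^m$ be nonempty compact, $U_0$ a compact metric space, $U(\cdot):Y\rightsquigarrow U_0$ upper semicontinuous and compact-valued, and $f:\mathbb{R}^m\times U_0\to\mathbb{R}^m$, $k:\mathbb{R}^m\times U_0\to\mathbb{R}$ continuous. Put $A(y):=\{u\in U(y): f(y,u)\in Y\}$ and $G:=\{(y,u):y\in Y,\ u\in A(y)\}$. Standing assumption: $A(y)\ne\emptyset$ for all $y$. An admissible process from $z\in Y$ is a pair $(y(t),u(t))$ with $y(0)=z$, $u(t)\in A(y(t))$ and $y(t+1)=f(y(t),u(t))$. Let $\mathcal U_T(y_0)$ denote the admissible controls from $y_0$ on $\{0,\dots,T-1\}$, and set $V_T(y_0):=\frac1T\min_{u\in\mathcal U_T(y_0)}\sum_{t=0}^{T-1}k(y(t),u(t))$. Periodic value: - A $\mathcal T$-periodic admissible process ($\mathcal T$ a positive integer) is an admissible process $(y_{\mathcal T},u_{\mathcal T})$ on $\{0,1,\dots\}$ with $(y_{\mathcal T}(t+\mathcal T),u_{\mathcal T}(t+\mathcal T))=(y_{\mathcal T}(t),u_{\mathcal T}(t))$ for all $t$. - It is finite-time reachable from $y_0$ if for some integer $\bar t\ge0$ some $u\in\mathcal U_{\bar t}(y_0)$ has trajectory with $y(\bar t)=y_{\mathcal T}(0)$. - $V_{per}(y_0):=\inf\frac1{\mathcal T}\sum_{t=0}^{\mathcal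 T-1}k(y_{\mathcal T}(t),u_{\mathcal T}(t))$, where the infimum is over all $\mathcal T$ and all such finite-time-reachable $\mathcal T$-periodic processes. LP value: - $\mathcal P(G)$ denotes the Borel probability measures on $G$ and $\mathcal M_+(G)$ the finite nonnegative Borel measures on $G$. - $W:=\{\gamma\in\mathcal P(G):\int_G(\varphi(f(y,u))-\varphi(y))\,d\gamma=0\ \forall\varphi\in C(Y)\}$. - $k^*(y_0)$ is the infimum of $\int_Gk\,d\gamma$ over pairs $(\gamma,\xi)\in\mathcal P(G)\times\mathcal M_+(G)$ with $\gamma\in W$ and $\int_G(\varphi(y_0)-\varphi(y))\,d\gamma+\int_G(\varphi(f(y,u))-\varphi(y))\,d\xi=0$ for all $\varphi\in C(Y)$. *)

From HB Require Import structures.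
From mathcomp Require Import all_boot all_order all_algebra.
From mathcomp Require Import all_classical all_reals all_analysis.
Set Implicit Arguments. Unset Strict Implicit. Unset Printing Implicit Defensive.
Import Order.TTheory GRing.Theory Num.Theory.
Import numFieldNormedType.Exports.
Local Open Scope classical_set_scope.
Local Open Scope ring_scope.

Section Defs.
Context {R : realType} {m : nat} {U0 : pseudoPMetricType R}.
Local Notation S := 'rV[R]_m.

Local Notation Borel_SU := (g_sigma_algebraType (@open (S * U0)%type)).

Variables (Y : set S) (U : S -> set U0) (f : S * U0 -> S) (k : S * U0 -> R).

Definition usc_on : Prop :=
  forall y, Y y -> forall O : set U0, open O -> U y `<=` O ->
    \forall y' \near y, Y y' -> U y' `<=` O.

Definition Aset (y : S) : set U0 := [set u | U y u /\ Y (f (y, u))].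
Definition Gset : set (S * U0) := [set p | Y p.1 /\ Aset p.1 p.2].

Fixpoint traj (z : S) (u : nat -> U0) (t : nat) : S :=
  match t with
  | 0 => z
  | t'.+1 => f (traj z u t', u t')
  end.

Definition admissible_ctrl (T : nat) (z : S) (u : nat -> U0) : Prop :=
  forall t, (t < T)%N -> Aset (traj z u t) (u t).

Definition V (T : nat) (z : S) : \bar R :=
  ereal_inf [set ((T%:R)^-1 * \sum_(t < T) k (traj z u t, u t))%:E
            | u in admissible_ctrl T z].

Definition periodic_process (P : nat) (yp : nat -> S) (up : nat -> U0) : Prop :=
  [/\ (0 < P)%N, Y (yp 0%N),
      (forall t, Aset (yp t) (up t) /\ yp t.+1 = f (yp t, up t)) &
      (forall t, yp (t + P)%N = yp t /\ up (t + P)%N = up t)].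

Definition finite_time_reachable (z : S) (yp : nat -> S) : Prop :=
  exists (tb : nat) (u : nat -> U0), admissible_ctrl tb z u /\ traj z u tb = yp 0%N.

Definition Vper (z : S) : \bar R :=
  ereal_inf [set x | exists (P : nat) (yp : nat -> S) (up : nat -> U0),
     [/\ periodic_process P yp up, finite_time_reachable z yp &
         x = ((P%:R)^-1 * \sum_(t < P) k (yp t, up t))%:E]].

Definition CY (phi : S -> R) : Prop := {within Y, continuous phi}.

(* Borel probability measures on G, seen as Borel measures on R^m x U0
   concentrated on G *)
Definition prob_on_G (mu : {measure set Borel_SU -> \bar R}) : Prop :=
  mu [set: Borel_SU] = 1%E /\ mu (~` (Gset : set Borel_SU)) = 0%E.

Definition finmeas_on_G (mu : {measure set Borel_SU -> \bar R}) : Prop :=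
  (mu [set: Borel_SU] < +oo)%E /\ mu (~` (Gset : set Borel_SU)) = 0%E.

Definition Wset (gamma : {measure set Borel_SU -> \bar R}) : Prop :=
  prob_on_G gamma /\
  forall phi, CY phi ->
    (\int[gamma]_(p in (Gset : set Borel_SU)) (phi (f p) - phi p.1)%:E = 0)%E.

Definition LP_feasible (z : S) (gamma xi : {measure set Borel_SU -> \bar R}) : Prop :=
  [/\ Wset gamma, finmeas_on_G xi &
      forall phi, CY phi ->
        (\int[gamma]_(p in (Gset : set Borel_SU)) (phi z - phi p.1)%:E
         + \int[xi]_(p in (Gset : set Borel_SU)) (phi (f p) - phi p.1)%:E = 0)%E].

Definition kstar (z : S) : \bar R :=
  ereal_inf [set (\int[gamma]_(p in (Gset : set Borel_SU)) (k p)%:E)%E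
            | gamma in [set g | exists xi, LP_feasible z g xi]].

End Defs.

From HB Require Import structures.
From mathcomp Require Import all_boot all_order all_algebra.
From mathcomp Require Import all_classical all_reals all_analysis.
From mathcomp Require Import measurable_realfun.
Set Implicit Arguments.
Unset Strict Implicit.
Unset Printing Implicit Defensive.
Import Order.TTheory GRing.Theory Num.Theory.
Import numFieldNormedType.Exports.
Local Open Scope classical_set_scope.
Local Open Scope ring_scope.

(* Since V_per(y0) is the liminf, it suffices to show k*(y0) <= V_per(y0).
   Given a P-periodic process reached from y0 after tb steps, concatenate the
   two controls into one admissible path (y(j), u(j)) with
   (y(tb + t), u(tb + t)) periodic.  Let gamma be the uniform probability on
   the cycle and xi = (1/P) sum_(t < P) sum_(j < tb + t) delta_(y(j), u(j))
   the occupation measure of the transients leading to each point of the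
   cycle.  Telescoping along the path shows that gamma is in W and that
   phi(y0) - phi(y(tb + t)) + sum_(j < tb + t) (phi(y(j + 1)) - phi(y(j))) = 0
   for every t, so (gamma, xi) is LP-feasible, while the integral of k against
   gamma is the average cost of the periodic process. *)

Section concentrated_measure.
Import HBNNSimple.
Local Open Scope ereal_scope.
Context d (T : measurableType d) (R : realType).
Variables (mu : {measure set T -> \bar R}) (A : set T).
Hypotheses (mA : measurable A) (muCA : mu (~` A) = 0).

Lemma ge0_integral_concentrated (G : T -> \bar R) : (forall x, 0 <= G x) ->
  \int[mu]_x G x = \int[mu]_x (G \_ A) x.
Proof.
move=> G0; have GA0 x : 0 <= (G \_ A) x by rewrite patchE; case: ifP.
rewrite !ge0_integralTE //; apply/eqP; rewrite eq_le; apply/andP; split.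
- apply: ge_ereal_sup => _ [h /= hG <-].
  have -> : sintegral mu h = sintegral mu (proj_nnsfun h mA).
    rewrite -integralT_nnsfun (ge0_negligible_integral (N := ~` A)) //.
    + by rewrite setTD setCK integral_nnsfun // mrestrict.
    + exact: measurableC.
    + by apply/measurable_EFinP; exact: measurable_funP.
    + by move=> *; rewrite lee_fin.
  apply: ereal_sup_ubound; exists (proj_nnsfun h mA) => // x.
  by rewrite -mrestrict !patchE; case: ifP => // _; exact: hG.
- apply: ge_ereal_sup => _ [h /= hG <-]; apply: ereal_sup_ubound.
  exists h => //= x; apply: le_trans (hG x) _.
  by rewrite patchE; case: ifP.
Qed.

Lemma integral_setI_concentrated (D : set T) (F : T -> \bar R) :
  \int[mu]_(x in D) F x = \int[mu]_(x in D `&` A) F x.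
Proof.
suff ge0_setI (G : T -> \bar R) : (forall x, 0 <= G x) ->
    \int[mu]_(x in D) G x = \int[mu]_(x in D `&` A) G x.
  by rewrite integralE [RHS]integralE !ge0_setI.
move=> G0; rewrite integral_mkcond [RHS]integral_mkcondr [RHS]integral_mkcond.
rewrite ge0_integral_concentrated; last by move=> x; rewrite patchE; case: ifP.
by congr integral; apply/funext => x; rewrite !patchE; case: ifP; case: ifP.
Qed.

End concentrated_measure.

Section dirac_sum.
Context d (T : measurableType d) (R : realType).
Implicit Types (c : {nonneg R}) (n : nat) (s : nat -> nat).
Implicit Types (r : nat -> nat -> T).

Definition dirac_sum c n s r : {measure set T -> \bar R} :=
  mscale c (msum (fun t => msum (fun j => \d_(r t j)) (s t)) n).

Lemma dirac_sumE c n s r X : dirac_sum c n s r X =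
  (c%:num * \sum_(t < n) \sum_(j < s t) (r t j \in X)%:R)%:E.
Proof.
rewrite /dirac_sum /mscale /msum /= EFinM; congr (_ * _)%E.
rewrite -sumEFin; apply: eq_bigr => t _.
by rewrite -sumEFin; apply: eq_bigr => j _; exact: diracE.
Qed.

Lemma dirac_sum_lty c n s r X : (dirac_sum c n s r X < +oo)%E.
Proof. by rewrite dirac_sumE ltry. Qed.

Lemma dirac_sumT c n s r :
  dirac_sum c n s r [set: T] = (c%:num * \sum_(t < n) (s t)%:R)%:E.
Proof.
rewrite dirac_sumE; congr (_ * _)%:E; apply: eq_bigr => t _.
rewrite (eq_bigr (fun _ => 1)) ?sumr_const ?card_ord // => j _.
by rewrite in_setT.
Qed.

Lemma dirac_sum_eq0 c n s r X :
  (forall t j, (t < n)%N -> (j < s t)%N -> ~ X (r t j)) ->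
  dirac_sum c n s r X = 0%E.
Proof.
move=> notX; rewrite dirac_sumE big1 ?mulr0 // => -[t tn] _.
by apply: big1 => -[j js] _; rewrite memNset //; exact: notX.
Qed.

Lemma ge0_integral_dirac_sum c n s r (E : set T) (F : T -> \bar R) :
  measurable E -> (forall t j, (t < n)%N -> (j < s t)%N -> E (r t j)) ->
  measurable_fun E F -> (forall x, (0 <= F x)%E) ->
  (\int[dirac_sum c n s r]_(x in E) F x
   = c%:num%:E * \sum_(t < n) \sum_(j < s t) F (r t j))%E.
Proof.
move=> mE Er mF F0; rewrite ge0_integral_mscale //; congr (_ * _)%E.
rewrite ge0_integral_measure_sum //; apply: eq_bigr => -[t tn] _.
rewrite ge0_integral_measure_sum //; apply: eq_bigr => -[j js] _.
by rewrite integral_dirac // diracE mem_set ?mul1e //; exact: Er.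
Qed.

Hypothesis measurable_set1 : forall x : T, measurable [set x].

(* [D] need not be measurable: the measure is carried by the countable, hence
   measurable, set of its atoms, on which every function is measurable. *)
Lemma integral_dirac_sum c n s r (D : set T) (g : T -> R) :
  (forall t j, (t < n)%N -> (j < s t)%N -> D (r t j)) ->
  (\int[dirac_sum c n s r]_(x in D) (g x)%:E
   = (c%:num * \sum_(t < n) \sum_(j < s t) g (r t j))%:E)%E.
Proof.
move=> Dr; pose atoms := range (fun q : nat * nat => r q.1 q.2).
have atomsr t j : atoms (r t j) by exists (t, j).
have measurable_sub X : X `<=` atoms -> measurable X.
  move=> Xatoms; apply: countable_measurable => //.
  apply: (sub_countable (subset_card_le Xatoms)).
  exact: (sub_countable (card_image_le _ _) (countableP _)).
have mE : measurable (D `&` atoms) by apply: measurable_sub => x [].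
have mF (F : T -> \bar R) : measurable_fun (D `&` atoms) F.
  by move=> _ B _; apply: measurable_sub => x [[]].
have Er t j : (t < n)%N -> (j < s t)%N -> (D `&` atoms) (r t j).
  by move=> tn js; split; [exact: Dr|exact: atomsr].
have null_atomsC : dirac_sum c n s r (~` atoms) = 0%E.
  by apply: dirac_sum_eq0 => t j _ _; apply; exact: atomsr.
rewrite (integral_setI_concentrated (measurable_sub _ (@subset_refl _ atoms))
  null_atomsC).
rewrite integralE !ge0_integral_dirac_sum // funerpos funerneg /=.
under [in X in (_ * X - _)%E]eq_bigr do rewrite sumEFin.
under [in X in (_ - _ * X)%E]eq_bigr do rewrite sumEFin.
rewrite !sumEFin -!EFinM -EFinB.
rewrite -mulrBr -sumrB; congr (_ * _)%:E; apply: eq_bigr => t _.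
by rewrite -sumrB; apply: eq_bigr => j _; rewrite -[in RHS](funrposBneg g).
Qed.

End dirac_sum.

Lemma closed_set1_pair (T1 T2 : topologicalType) (a : T1) (b : T2) :
  closed [set a] -> closed [set b] -> closed [set (a, b)].
Proof.
move=> ca cb.
have -> : [set (a, b)] = fst @^-1` [set a] `&` snd @^-1` [set b].
  by apply/seteqP; split => [_ -> //|[x y] /= [-> ->]].
apply: closedI.
- by apply: (proj1 (continuous_closedP _)) ca => x; exact: cvg_fst.
- by apply: (proj1 (continuous_closedP _)) cb => x; exact: cvg_snd.
Qed.

Section periodic_occupation_measures.
Context {R : realType} {m : nat} {U0 : pseudoPMetricType R}.
Local Notation S := 'rV[R]_m.
Local Notation Borel_SU := (g_sigma_algebraType (@open (S * U0)%type)).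
Variables (Y : set S) (U : S -> set U0) (f : S * U0 -> S).
Hypothesis U0_hausdorff : hausdorff_space U0.

Let measurable_set1 (p : Borel_SU) : measurable [set p].
Proof.
rewrite -[[set p]]setCK; apply: measurableC; apply: sub_gen_smallest.
case: p => a b; apply: closed_openC; apply: closed_set1_pair.
- apply: accessible_closed_set1; apply: hausdorff_accessible.
  exact: norm_hausdorff.
- by apply: accessible_closed_set1; exact: hausdorff_accessible.
Qed.

Lemma sum_increments (q : nat -> S * U0) (phi : S -> R) (n : nat) :
  (forall j, (q j.+1).1 = f (q j)) ->
  \sum_(j < n) (phi (f (q j)) - phi (q j).1) = phi (q n).1 - phi (q 0%N).1.
Proof.
move=> q_step.
rewrite -(big_mkord xpredT (fun j => phi (f (q j)) - phi (q j).1)).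
apply: (@telescope_sumr_eq _ _ _ (fun j => phi (q j).1)) => // j _.
by rewrite q_step.
Qed.

Variables (z : S) (p : nat -> Borel_SU) (tb P : nat).
Hypotheses (P_gt0 : (0 < P)%N) (p_in_G : forall j, Gset Y U f (p j))
  (p_step : forall j, (p j.+1).1 = f (p j)) (p_start : (p 0%N).1 = z)
  (p_cycle : (p (tb + P)%N).1 = (p tb).1).

Let c : {nonneg R} := (P%:R^-1)%:nng.

Definition cycle_measure := dirac_sum c P (fun=> 1%N) (fun t _ => p (tb + t)%N).

Definition transient_measure :=
  dirac_sum c P (fun t => tb + t)%N (fun _ j => p j).

Lemma integral_cycle_measure (g : Borel_SU -> R) :
  (\int[cycle_measure]_(x in (Gset Y U f : set Borel_SU)) (g x)%:E
   = (P%:R^-1 * \sum_(t < P) g (p (tb + t)%N))%:E)%E.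
Proof.
rewrite integral_dirac_sum //.
by under eq_bigr => t _ do rewrite big_ord1.
Qed.

Lemma integral_transient_measure (g : Borel_SU -> R) :
  (\int[transient_measure]_(x in (Gset Y U f : set Borel_SU)) (g x)%:E
   = (P%:R^-1 * \sum_(t < P) \sum_(j < tb + t) g (p j))%:E)%E.
Proof. exact: integral_dirac_sum. Qed.

Lemma cycle_measure_W : Wset Y U f cycle_measure.
Proof.
split; first split.
- rewrite dirac_sumT sumr_const card_ord /= mulVf //.
  by rewrite pnatr_eq0 -lt0n.
- by apply: dirac_sum_eq0 => t j _ _; apply.
move=> phi _; rewrite integral_cycle_measure.
rewrite (sum_increments phi P (q := fun t => p (tb + t)%N)) => [|t].
  by rewrite addn0 p_cycle subrr mulr0.
by rewrite addnS p_step.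
Qed.

Lemma cycle_transient_LP_feasible :
  LP_feasible Y U f z cycle_measure transient_measure.
Proof.
split.
- exact: cycle_measure_W.
- by split; [exact: dirac_sum_lty|apply: dirac_sum_eq0 => t j _ _; apply].
move=> phi _.
rewrite integral_cycle_measure integral_transient_measure -EFinD -mulrDr.
rewrite -big_split big1 /= ?mulr0 // => t _.
by rewrite (sum_increments phi _ p_step) p_start addrA subrK subrr.
Qed.

End periodic_occupation_measures.

Section reachable_periodic_processes.
Context {R : realType} {m : nat} {U0 : pseudoPMetricType R}.
Local Notation S := 'rV[R]_m.
Variables (Y : set S) (U : S -> set U0) (f : S * U0 -> S) (k : S * U0 -> R).

Lemma reachable_periodic_path (z : S) (P : nat) (yp : nat -> S)
    (up : nat -> U0) :
  Y z -> periodic_process Y U f P yp up -> finite_time_reachable Y U f z yp ->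
  exists (p : nat -> S * U0) (tb : nat),
    [/\ forall j, Gset Y U f (p j), forall j, (p j.+1).1 = f (p j),
        (p 0%N).1 = z & forall t, p (tb + t)%N = (yp t, up t)].
Proof.
move=> Yz [_ _ yp_step _] [tb [u [u_adm u_reach]]].
pose w j := if (j < tb)%N then u j else up (j - tb)%N.
pose x := traj f z w.
have x_succ j : x j.+1 = f (x j, w j) by [].
have x_prefix j : (j <= tb)%N -> x j = traj f z u j.
  elim: j => // j IH lt_j_tb.
  by rewrite x_succ (IH (ltnW lt_j_tb)) /w lt_j_tb.
have w_suffix t : w (tb + t)%N = up t.
  by rewrite /w ltnNge leq_addr /= addKn.
have x_suffix t : x (tb + t)%N = yp t.
  elim: t => [|t IH]; first by rewrite addn0 x_prefix.
  by rewrite addnS x_succ IH w_suffix (proj2 (yp_step t)).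
have x_adm j : Aset Y U f (x j) (w j).
  have [lt_j_tb|le_tb_j] := ltnP j tb.
    by rewrite (x_prefix _ (ltnW lt_j_tb)) /w lt_j_tb; exact: u_adm.
  by rewrite -(subnKC le_tb_j) x_suffix w_suffix; exact: (proj1 (yp_step _)).
exists (fun j => (x j, w j)), tb; split => // [j|t]; last first.
  by rewrite x_suffix w_suffix.
split => //=; case: j => [|j] //.
by rewrite x_succ; case: (x_adm j).
Qed.

Lemma kstar_le_Vper (z : S) : hausdorff_space U0 -> Y z ->
  (kstar Y U f k z <= Vper Y U f k z)%E.
Proof.
move=> U0_hausdorff Yz.
apply: le_ereal_inf_tmp => _ [P [yp [up [per reach ->]]]].
have [p [tb [p_in_G p_step p_start p_tail]]] :=
  reachable_periodic_path Yz per reach.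
have P_gt0 : (0 < P)%N by case: per.
have p_cycle : (p (tb + P)%N).1 = (p tb).1.
  case: per => _ _ _ /(_ 0%N) [yp_P _].
  by rewrite -[in RHS](addn0 tb) !p_tail /= -yp_P.
apply: ereal_inf_lbound; exists (cycle_measure p tb P).
  exists (transient_measure p tb P).
  exact: cycle_transient_LP_feasible.
rewrite integral_cycle_measure //.
by congr (_ * _)%:E; apply: eq_bigr => t _; rewrite p_tail.
Qed.

End reachable_periodic_processes.

Theorem corollary2p5 (R : realType) (m : nat) (U0 : pseudoPMetricType R)
  (Y : set 'rV[R]_m) (U : 'rV[R]_m -> set U0)
  (f : 'rV[R]_m * U0 -> 'rV[R]_m) (k : 'rV[R]_m * U0 -> R)
  (hY0 : Y !=set0) (hYc : compact Y)
  (hU0sep : hausdorff_space U0) (hU0c : compact [set: U0])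
  (hUusc : usc_on Y U) (hUcpt : forall y, Y y -> compact (U y))
  (hf : continuous f) (hk : continuous k)
  (hA : forall y, Y y -> Aset Y U f y !=set0)
  (y0 : 'rV[R]_m) (hy0 : Y y0) :
  Vper Y U f k y0 = limn_einf (fun T => V Y U f k T y0) ->
  (limn_einf (fun T => V Y U f k T y0) >= kstar Y U f k y0)%E.
Proof. by move=> <-; exact: kstar_le_Vper. Qed.
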